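(* Let $\delta_1,\delta_2>0$, $\delta=\delta_1+\delta_2$, and let $f\in\mathcal H$ admit a decomposition $f=\mathcal C+\mathcal T$ with $\|\Phi_1^*\mathcal C\|_1+\|\Phi_2^*\mathcal T\|_1<\infty$, where $\mathcal C$ is $\delta_1$-relatively sparse in $\Phi_1$ with respect to $\Lambda_1$ and $\mathcal T$ is $\delta_2$-relatively sparse in $\Phi_2$ with respect to $\Lambda_2$. Let $(\mathcal C^\star,\mathcal T^\star)$ solve (Inp-Sep) for the data $P_Kf$. Set $$\mu_c=\max\{\mu_c(\Lambda_1,P_M\Phi_1;\Phi_1)+\mu_c(\Lambda_2,P_M\Phi_2;\Phi_1),\ \mu_c(\Lambda_2,P_M\Phi_2;\Phi_2)+\mu_c(\Lambda_1,P_M\Phi_1;\Phi_2)\}+\max\{\mu_c(\Lambda_1,\Phi_1;\Phi_2),\ \mu_c(\Lambda_2,\Phi_2;\Phi_1)\}.$$ If $\mu_c<\tfrac12$, then $\|\mathcal C^\star-\mathcal C\|_2+\|\mathcal T^\star-\mathcal T\|_2\le\frac{2\delta}{1-2\mu_c}$.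
   Context: Let $\mathcal H$ be a separable Hilbert space with an orthogonal decomposition $\mathcal H=\mathcal H_K\oplus\mathcal H_M$ (known and missing part), and let $P_K,P_M$ be the orthogonal projections onto $\mathcal H_K,\mathcal H_M$. Let $\Phi_1=(\phi_{1i})_{i\in I}$ and $\Phi_2=(\phi_{2j})_{j\in J}$ be Parseval frames for $\mathcal H$ with analysis operators $\Phi_1^*f=(\langle f,\phi_{1i}\rangle)_{i\in I}$, $\Phi_2^*f=(\langle f,\phi_{2j}\rangle)_{j\in J}$. $\mathbf 1_\Lambda$ restricts a coefficient sequence to $\Lambda$, $\Lambda^c$ is the complement, and $\|\cdot\|_1$ is the (possibly infinite) $\ell^1$ norm. Fix $\Lambda_1\subset I$, $\Lambda_2\subset J$. Relative sparsity: $g$ is $\delta$-relatively sparse in a Parseval frame $\Phi$ with respect to $\Lambda$ if $\|\mathbf 1_{\Lambda^c}\Phi^*g\|_1\le\delta$. (Inp-Sep): given $P_Kf$, $(\mathcal C^\star,\mathcal T^\star)$ is a minimizer of $\|\Phi_1^*x_1\|_1+\|\Phi_2^*x_2\|_1$ over $x_1,x_2\in\mathcal H$ subject to $P_K(x_1+x_2)=P_Kf$. Cluster coherence: for $a,b\in\{1,2\}$ with $I_1=I$, $I_2=J$ and $\Lambda\subset I_a$: $\mu_c(\Lambda,\Phi_a;\Phi_b)=\max_{j\in I_b}\sum_{i\in\Lambda}|\langle\phi_{ai},\phi_{bj}\rangle|$ and $\mu_c(\Lambda,P_M\Phi_a;\Phi_b)=\max_{j\in I_b}\sum_{i\in\Lambda}|\langle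 P_M\phi_{ai},\phi_{bj}\rangle|$ (suprema if not attained). *)

From mathcomp Require Import all_boot all_order all_algebra.
From mathcomp Require Import all_classical all_reals all_analysis.
From mathcomp Require Import complex.

Set Implicit Arguments.
Unset Strict Implicit.
Unset Printing Implicit Defensive.

Import Order.TTheory GRing.Theory Num.Theory.
Local Open Scope ring_scope.
Local Open Scope classical_set_scope.

Definition is_inner_product (R : realType) (V : lmodType R[i])
    (ip : V -> V -> R[i]) : Prop :=
  [/\ (forall (a : R[i]) (x y z : V), ip (a *: x + y) z = a * ip x z + ip y z),
      (forall x y : V, ip y x = conjc (ip x y)),
      (forall x : V, complex.Im (ip x x) = 0 /\ 0 <= complex.Re (ip x x)) &
      (forall x : V, ip x x = 0 -> x = 0)].

Definition hnorm (R : realType) (V : lmodType R[i]) (ip : V -> V -> R[i])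
    (x : V) : R := Num.sqrt (complex.Re (ip x x)).

Definition is_sep_hilbert (R : realType) (V : lmodType R[i])
    (ip : V -> V -> R[i]) : Prop :=
  [/\ is_inner_product ip,
      (forall u : nat -> V,
        (forall e : R, 0 < e -> exists N : nat, forall m n : nat,
            (N <= m)%N -> (N <= n)%N -> hnorm ip (u m - u n) < e) ->
        exists l : V, forall e : R, 0 < e -> exists N : nat, forall n : nat,
            (N <= n)%N -> hnorm ip (u n - l) < e) &
      (exists d : nat -> V, forall (x : V) (e : R), 0 < e ->
          exists n : nat, hnorm ip (x - d n) < e)].

Definition is_orth_proj (R : realType) (V : lmodType R[i])
    (ip : V -> V -> R[i]) (P : V -> V) : Prop :=
  [/\ (forall (a : R[i]) (x y : V), P (a *: x + y) = a *: P x + P y),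
      (forall x : V, P (P x) = P x) &
      (forall x y : V, ip (P x) y = ip x (P y))].

Definition analysis (R : realType) (V : lmodType R[i]) (ip : V -> V -> R[i])
    (I : Type) (phi : I -> V) (f : V) : I -> R[i] := fun i => ip f (phi i).

Definition l1_on (R : realType) (I : choiceType) (A : set I) (c : I -> R[i])
    : \bar R := (\esum_(i in A) ((Normc.normc (c i))%:E))%E.

Definition l1 (R : realType) (I : choiceType) (c : I -> R[i]) : \bar R :=
  l1_on setT c.

Definition parseval_frame (R : realType) (V : lmodType R[i])
    (ip : V -> V -> R[i]) (I : choiceType) (phi : I -> V) : Prop :=
  forall f : V,
    (\esum_(i in [set: I]) ((Normc.normc (ip f (phi i)) ^+ 2)%:E))%E
    = ((hnorm ip f) ^+ 2)%:E.

Definition rel_sparse (R : realType) (V : lmodType R[i])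
    (ip : V -> V -> R[i]) (I : choiceType) (phi : I -> V)
    (Lambda : set I) (delta : R) (g : V) : Prop :=
  (l1_on (~` Lambda) (analysis ip phi g) <= delta%:E)%E.

Definition inp_sep_solution (R : realType) (V : lmodType R[i])
    (ip : V -> V -> R[i]) (I J : choiceType) (phi1 : I -> V) (phi2 : J -> V)
    (PK : V -> V) (f Cs Ts : V) : Prop :=
  PK (Cs + Ts) = PK f /\
  forall x1 x2 : V, PK (x1 + x2) = PK f ->
    (l1 (analysis ip phi1 Cs) + l1 (analysis ip phi2 Ts)
      <= l1 (analysis ip phi1 x1) + l1 (analysis ip phi2 x2))%E.

Definition cluster_coherence (R : realType) (V : lmodType R[i])
    (ip : V -> V -> R[i]) (I J : choiceType) (Lambda : set I)
    (psi : I -> V) (phi : J -> V) : \bar R :=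
  ereal_sup (range (fun j : J =>
     (\esum_(i in Lambda) ((Normc.normc (ip (psi i) (phi j)))%:E))%E)).

From mathcomp Require Import all_boot all_order all_algebra.
From mathcomp Require Import all_classical all_reals all_analysis.
From mathcomp Require Import complex.
From mathcomp Require Import ring lra ssrAC.
Import Order.TTheory GRing.Theory Num.Theory.
Local Open Scope ring_scope.
Local Open Scope classical_set_scope.

(* Write z1 = Cs - C and z2 = Ts - T for the two reconstruction errors and
   S = |Phi1^* z1|_1 + |Phi2^* z2|_1 for their joint l^1 size.
   1. Cone condition.  Splitting every l^1 norm into its part on Lambda_k and
      on the complement, the optimality of (Cs, Ts) and the relative
      sparsity of (C, T) give  S <= 2 (X1 + X2) + 2 delta,  where
      Xk = |1_{Lambda_k} Phi_k^* z_k|_1  (lemmas [l1_diff_cone],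
      [l1_pair_cone]); this part only uses the triangle inequality.
   2. Coherence bound.  As P_K (z1 + z2) = 0 and P_K + P_M = id, each
      coefficient <z1, phi1_i> is a combination of <z_k, P_M phi1_i> and
      <z2, phi1_i> ([missing_part_identity]).  In a Parseval frame
      |<x, g>| <= sum_j |<x, psi_j>| |<g, psi_j>| ([frame_ip_bound]), hence
      every sum over a cluster is controlled by an l^1 norm times a cluster
      coherence ([cluster_sum_le], [cluster_error_bound]); adding both gives
      X1 + X2 <= mu_c S ([coherence_mix]).
   3. From S <= 2 mu_c S + 2 delta and mu_c < 1/2 we get
      S <= 2 delta / (1 - 2 mu_c) ([error_ratio_bound]), and the Hilbert
      norms are dominated by the l^1 norms ([hnorm_le_l1]).
   A Parseval frame with empty index set forces the space to be trivial
   ([parseval_frame_empty]); otherwise all coherences are nonnegative. *)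

Local Notation absc := (@Normc.normc _).

Section ExtendedSums.
Context {R : realType}.
Local Open Scope ereal_scope.

Lemma esum_mulr_le (T : choiceType) (A : set T) (u : T -> \bar R) (c : \bar R) :
  (forall i, 0 <= u i) -> 0 <= c ->
  \esum_(i in A) (u i * c) <= (\esum_(i in A) u i) * c.
Proof.
move=> u0 c0; apply: ge_ereal_sup => _ [X [finX XA] <-].
rewrite fsbig_finite// -ge0_sume_distrl; last by move=> i _; apply: u0.
apply: lee_wpmul2r => //; rewrite -fsbig_finite//.
by apply: ereal_sup_ubound; exists X.
Qed.

Lemma esum_swap_le (T1 T2 : choiceType) (A : set T1) (B : set T2)
  (a : T1 -> T2 -> \bar R) : (forall i j, 0 <= a i j) ->
  \esum_(i in A) \esum_(j in B) a i j <= \esum_(j in B) \esum_(i in A) a i j.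
Proof.
move=> a0; apply: ge_ereal_sup => _ [X [finX XA] <-].
rewrite fsbig_finite// -esum_sum; last by move=> *; exact: a0.
apply: le_esum => j Bj; rewrite -fsbig_finite//.
by apply: ereal_sup_ubound; exists X.
Qed.

Lemma esum_term_le (T : choiceType) (f : T -> \bar R) (j : T) :
  (forall i, 0 <= f i) -> f j <= \esum_(i in [set: T]) f i.
Proof.
move=> f0; apply: esum_ge; exists [set j]; last by rewrite fsbig_set1.
by split; [exact: finite_set1 | by []].
Qed.

End ExtendedSums.

Section ComplexModulus.
Context {R : realType}.
Implicit Types z w : R[i].

Lemma absc_ge0 z : 0 <= absc z.
Proof. by case: z => a b; exact: sqrtr_ge0. Qed.

Lemma absc_conj z : absc (conjc z) = absc z.
Proof. by case: z => a b /=; rewrite sqrrN. Qed.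

Lemma absc_real (r : R) : 0 <= r -> absc (r%:C)%C = r.
Proof. by move=> r0 /=; rewrite expr0n /= addr0 sqrtr_sqr ger0_norm. Qed.

Lemma conjc_mul_self w : conjc w * w = ((absc w) ^+ 2)%:C%C.
Proof.
case: w => a b /=; rewrite sqr_sqrtr ?addr_ge0 ?sqr_ge0 //.
apply/eqP; rewrite eq_complex /=; apply/andP; split; apply/eqP.
  by rewrite expr2; ring.
by ring.
Qed.

Lemma ReD z w : complex.Re (z + w) = complex.Re z + complex.Re w.
Proof. by case: z; case: w. Qed.

Lemma Re_conj z : complex.Re (conjc z) = complex.Re z.
Proof. by case: z. Qed.

Lemma absc_sqrD z w :
  absc (z + w) ^+ 2 <= absc z ^+ 2 + absc w ^+ 2 + absc z * absc w + absc z * absc w.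
Proof.
have := le_normcD z w; have := absc_ge0 (z + w).
have := absc_ge0 z; have := absc_ge0 w.
rewrite !expr2; nra.
Qed.

Lemma absc_sub_add z w u : absc (z - w + u) <= absc z + absc w + absc u.
Proof.
apply: le_trans (le_normcD _ _) _; rewrite lerD2r.
by apply: le_trans (le_normcD _ _) _; rewrite normcN.
Qed.

End ComplexModulus.

Section CoefficientNorms.
Context {R : realType} {I : choiceType}.
Implicit Types (a b c d e : I -> R[i]) (A L : set I).
Local Open Scope ereal_scope.

Lemma l1_on_ge0 A c : 0 <= l1_on A c.
Proof. by apply: esum_ge0 => i _; rewrite lee_fin absc_ge0. Qed.

Lemma l1_ge0 c : 0 <= l1 c.
Proof. exact: l1_on_ge0. Qed.

Lemma l1_split L c : l1 c = l1_on L c + l1_on (~` L) c.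
Proof. by rewrite /l1 /l1_on (esumID L) ?setTI // => i _; rewrite lee_fin absc_ge0. Qed.

Lemma l1_on_triangle A c d e :
  (forall i, A i -> (absc (c i) <= absc (d i) + absc (e i))%R) ->
  l1_on A c <= l1_on A d + l1_on A e.
Proof.
move=> cde; rewrite /l1_on -esumD => [|i _|i _]; rewrite ?lee_fin ?absc_ge0 //.
by apply: le_esum => i Ai; rewrite -EFinD lee_fin cde.
Qed.

Lemma l1_on_sub A b a : l1_on A (b \- a)%R <= l1_on A b + l1_on A a.
Proof.
by apply: l1_on_triangle => i _; apply: le_trans (le_normcD _ _) _; rewrite normcN.
Qed.

(* The null-space-type inequality behind l^1 recovery: for d = b - a,
   |d|_1 + |a|_1 <= |b|_1 + 2 |1_L d|_1 + 2 |1_{L^c} a|_1. *)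
Lemma l1_diff_cone L a b :
  l1 (b \- a)%R + l1 a <=
  l1 b + (l1_on L (b \- a)%R + l1_on L (b \- a)%R) + (l1_on (~` L) a + l1_on (~` L) a).
Proof.
rewrite (l1_split L (b \- a)%R) (l1_split L a) (l1_split L b).
set X := l1_on L (b \- a)%R; set Y := l1_on (~` L) (b \- a)%R.
set A := l1_on L a; set B := l1_on (~` L) a.
set P := l1_on L b; set Q := l1_on (~` L) b.
have hY : Y <= Q + B by exact: l1_on_sub.
have hA : A <= P + X.
  apply: l1_on_triangle => i _ /=.
  by have := le_normcD (b i) (- (b i - a i))%R; rewrite normcN opprB addrC subrK.
apply: le_trans (leeD (leeD2l X hY) (leeD2r B hA)) _.
by rewrite addeACA (addeCA X P) -(addeA Q B B) addeACA addeA.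
Qed.

End CoefficientNorms.

Lemma l1_pair_cone {R : realType} {I J : choiceType} {a1 b1 : I -> R[i]}
  {a2 b2 : J -> R[i]} {L1 : set I} {L2 : set J} {delta1 delta2 : R} :
  (l1 a1 + l1 a2 < +oo)%E -> (l1 b1 + l1 b2 <= l1 a1 + l1 a2)%E ->
  (l1_on (~` L1) a1 <= delta1%:E)%E -> (l1_on (~` L2) a2 <= delta2%:E)%E ->
  (l1 (b1 \- a1)%R + l1 (b2 \- a2)%R <=
     (l1_on L1 (b1 \- a1)%R + l1_on L2 (b2 \- a2)%R)
   + (l1_on L1 (b1 \- a1)%R + l1_on L2 (b2 \- a2)%R)
   + (delta1 + delta2 + (delta1 + delta2))%:E)%E.
Proof.
move=> fin opt sp1 sp2.
have finA : (l1 a1 + l1 a2)%E \is a fin_num.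
  by rewrite ge0_fin_numE ?adde_ge0 ?l1_ge0.
rewrite -(leeD2rE _ _ finA) [in leRHS]addeC [in leRHS]addeA.
rewrite [X in (X <= _)%E]addeACA.
apply: le_trans (leeD (l1_diff_cone L1 a1 b1) (l1_diff_cone L2 a2 b2)) _.
rewrite [X in (X <= _)%E](AC ((1*2)*2*((1*2)*2))%AC
  ((1*6)*((2*7)*(3*8))*((4*9)*(5*10)))) !EFinD.
by apply: leeD; [apply: leeD | apply: leeD; apply: leeD].
Qed.

Section InnerProduct.
Context {R : realType} {V : lmodType R[i]} (ip : V -> V -> R[i]).
Hypothesis Hip : is_inner_product ip.

Lemma ipDl x y z : ip (x + y) z = ip x z + ip y z.
Proof. by case: Hip => lin _ _ _; have := lin 1 x y z; rewrite scale1r mul1r. Qed.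

Lemma ip0l z : ip 0 z = 0.
Proof. by apply: (addrI (ip 0 z)); rewrite -ipDl !addr0. Qed.

Lemma ipZl a x z : ip (a *: x) z = a * ip x z.
Proof. by case: Hip => lin _ _ _; have := lin a x 0 z; rewrite !addr0 ip0l addr0. Qed.

Lemma ipBl x y z : ip (x - y) z = ip x z - ip y z.
Proof. by rewrite ipDl -scaleN1r ipZl mulN1r. Qed.

Lemma ip_conj x y : ip y x = conjc (ip x y).
Proof. by case: Hip. Qed.

Lemma ipDr x y z : ip x (y + z) = ip x y + ip x z.
Proof. by rewrite ip_conj ipDl raddfD /= -!ip_conj. Qed.

Lemma hnorm_ge0 x : 0 <= hnorm ip x.
Proof. exact: sqrtr_ge0. Qed.

Lemma hnorm_sq x : hnorm ip x ^+ 2 = complex.Re (ip x x).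
Proof. by rewrite /hnorm sqr_sqrtr //; case: Hip => _ _ pos _; case: (pos x). Qed.

Lemma Re_ipDD x g : complex.Re (ip (x + g) (x + g)) =
  complex.Re (ip x x) + complex.Re (ip g g) + 2 * complex.Re (ip x g).
Proof. rewrite ipDl !ipDr !ReD [ip g x]ip_conj; have := Re_conj (ip x g); lra. Qed.

Lemma analysisB (K : choiceType) (psi : K -> V) x y :
  analysis ip psi (x - y) = (analysis ip psi x \- analysis ip psi y)%R.
Proof. by apply/funext => j; rewrite /analysis ipBl. Qed.

End InnerProduct.

Section ParsevalFrame.
Context {R : realType} {V : lmodType R[i]} (ip : V -> V -> R[i]).
Hypothesis Hip : is_inner_product ip.
Context {K : choiceType} (psi : K -> V).
Hypothesis frame : parseval_frame ip psi.
Local Open Scope ereal_scope.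

Definition frame_corr (x g : V) : \bar R :=
  \esum_(j in [set: K]) (absc (ip x (psi j)) * absc (ip g (psi j)))%:E.

Lemma frame_corr_ge0 x g : 0 <= frame_corr x g.
Proof. by apply: esum_ge0 => j _; rewrite lee_fin mulr_ge0 ?absc_ge0. Qed.

(* Polarization: expanding |x + g|^2 through the Parseval identity bounds
   Re <x, g> by the frame correlation. *)
Lemma Re_ip_le_frame_corr x g : (complex.Re (ip x g))%:E <= frame_corr x g.
Proof.
have := frame_corr_ge0 x g.
have expand : (hnorm ip (x + g) ^+ 2)%:E <=
    (hnorm ip x ^+ 2)%:E + (hnorm ip g ^+ 2)%:E + frame_corr x g + frame_corr x g.
  rewrite -!frame /frame_corr -!esumD => [|j _|j _|j _|j _|j _|j _];
    rewrite ?adde_ge0 // ?lee_fin ?mulr_ge0 ?sqr_ge0 ?absc_ge0 //.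
  by apply: le_esum => j _; rewrite (ipDl _ Hip) -!EFinD lee_fin absc_sqrD.
move: expand; case: (frame_corr x g) => [c| |] // + _; last by move=> _; rewrite leey.
rewrite -!EFinD !lee_fin !(hnorm_sq _ Hip) (Re_ipDD _ Hip); lra.
Qed.

(* |<x, g>| <= sum_j |<x, psi_j>| |<g, psi_j>|: rotate x by the phase of
   <x, g> and apply [Re_ip_le_frame_corr]. *)
Lemma frame_ip_bound x g : (absc (ip x g))%:E <= frame_corr x g.
Proof.
have [w0|wn0] := eqVneq (ip x g) 0%R.
  by rewrite w0 Normc.normc0 frame_corr_ge0.
set w := ip x g in wn0 *.
have absw0 : ((absc w)%:C)%C != 0%R :> R[i].
  by apply: contra wn0 => /eqP [] /Normc.eq0_normc ->.
set u : R[i] := (conjc w * ((absc w)%:C)%C^-1)%R.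
have unit_u : absc u = 1%R.
  rewrite /u Normc.normcM absc_conj Normc.normcV absc_real ?absc_ge0 //.
  by rewrite divrr // unitfE; apply: contra absw0 => /eqP ->.
have rotate : (u * w = ((absc w)%:C)%C)%R.
  by rewrite /u mulrAC conjc_mul_self expr2 rmorphM /= mulfK.
have := Re_ip_le_frame_corr (u *: x) g; rewrite (ipZl _ Hip) rotate /=.
move/le_trans; apply; apply: le_esum => j _.
by rewrite (ipZl _ Hip) Normc.normcM unit_u mul1r.
Qed.

(* In a Parseval frame the norm is dominated by the l^1 norm of the
   coefficients: ||x||^2 = sum |c_j|^2 <= (sup |c_j|) sum |c_j| <= |c|_1^2. *)
Lemma hnorm_le_l1 x : (hnorm ip x)%:E <= l1 (analysis ip psi x).
Proof.
have := @l1_ge0 R K (analysis ip psi x).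
have term j : (absc (ip x (psi j)))%:E <= l1 (analysis ip psi x).
  by apply: esum_term_le => i; rewrite lee_fin absc_ge0.
have sq : (hnorm ip x ^+ 2)%:E <= l1 (analysis ip psi x) * l1 (analysis ip psi x).
  rewrite -frame; apply: le_trans (_ : _ <= \esum_(j in [set: K])
      ((absc (ip x (psi j)))%:E * l1 (analysis ip psi x))) _.
    apply: le_esum => j _; rewrite expr2 EFinM.
    by apply: lee_wpmul2l; rewrite ?lee_fin ?absc_ge0 ?term.
  by apply: esum_mulr_le => [i|]; rewrite ?lee_fin ?absc_ge0 ?l1_ge0.
move: sq term; case: (l1 (analysis ip psi x)) => [s| |] //= sq _ s0;
  last by rewrite leey.
rewrite -EFinM lee_fin in sq; rewrite lee_fin in s0; rewrite lee_fin.
by have := hnorm_ge0 ip x; move: sq; rewrite expr2; nra.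
Qed.

Lemma cluster_sum_le (I0 : choiceType) (L : set I0) (theta : I0 -> V) (x : V) :
  0 <= cluster_coherence ip L theta psi ->
  \esum_(i in L) (absc (ip x (theta i)))%:E <=
    l1 (analysis ip psi x) * cluster_coherence ip L theta psi.
Proof.
move=> coh0; set mu := cluster_coherence _ _ _ _.
apply: (@le_trans _ _ (\esum_(i in L) frame_corr x (theta i))).
  by apply: le_esum => i _; exact: frame_ip_bound.
apply: le_trans; first by apply: esum_swap_le => i j; rewrite lee_fin mulr_ge0 ?absc_ge0.
apply: (@le_trans _ _ (\esum_(j in [set: K]) ((absc (ip x (psi j)))%:E * mu))); last first.
  by apply: esum_mulr_le => // j; rewrite lee_fin absc_ge0.
apply: le_esum => j _; under eq_esum do rewrite EFinM muleC.
apply: le_trans; first by apply: esum_mulr_le => [i|]; rewrite lee_fin absc_ge0.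
rewrite muleC; apply: lee_wpmul2l; first by rewrite lee_fin absc_ge0.
by apply: ereal_sup_ubound; exists j.
Qed.

Lemma parseval_frame_empty : (K -> False) -> forall v, hnorm ip v = 0%R.
Proof.
move=> noK v; have := frame v; rewrite esum1 => [[/esym/eqP]|j]; last by case: noK.
by rewrite sqrf_eq0 => /eqP.
Qed.

End ParsevalFrame.

Lemma cluster_coherence_ge0 {R : realType} {V : lmodType R[i]}
  {ip : V -> V -> R[i]} {I0 K : choiceType} {L : set I0} {theta : I0 -> V}
  {psi : K -> V} : K -> (0 <= cluster_coherence ip L theta psi)%E.
Proof.
move=> j; apply: (@le_trans _ _ (\esum_(i in L) (absc (ip (theta i) (psi j)))%:E)%E).
  by apply: esum_ge0 => i _; rewrite lee_fin absc_ge0.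
by apply: ereal_sup_ubound; exists j.
Qed.

Lemma orth_projD {R : realType} {V : lmodType R[i]} {ip : V -> V -> R[i]}
  {P : V -> V} : is_orth_proj ip P -> forall x y, P (x + y) = P x + P y.
Proof. by case=> lin _ _ x y; have := lin 1 x y; rewrite !scale1r. Qed.

Lemma orth_projB {R : realType} {V : lmodType R[i]} {ip : V -> V -> R[i]}
  {P : V -> V} : is_orth_proj ip P -> forall x y, P (x - y) = P x - P y.
Proof.
move=> HP x y; have P0 : P 0 = 0.
  by apply: (addrI (P 0)); rewrite -(orth_projD HP) !addr0.
have := orth_projD HP x (- y); case: HP => lin _ _ ->.
by have := lin (-1) y 0; rewrite !addr0 P0 addr0 !scaleN1r => ->.
Qed.

(* If P_K kills z1 + z2, then z1 = P_M z1 - z2 + P_M z2, so every analysis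
   coefficient of z1 is expressed through the missing part P_M. *)
Lemma missing_part_identity {R : realType} {V : lmodType R[i]}
  {ip : V -> V -> R[i]} {PK PM : V -> V} {z1 z2 : V} :
  is_inner_product ip -> is_orth_proj ip PK -> is_orth_proj ip PM ->
  (forall x, PK x + PM x = x) -> PK (z1 + z2) = 0 ->
  forall g, ip z1 g = ip z1 (PM g) - ip z2 g + ip z2 (PM g).
Proof.
move=> Hip HPK [_ _ adjM] KM PKz g.
have PKE x : PK x = x - PM x by rewrite -{2}(KM x) addrK.
have z1E : z1 = PM z1 - z2 + PM z2.
  have : PK z1 + PK z2 = 0 by rewrite -(orth_projD HPK).
  rewrite !PKE => sum0; rewrite -[LHS]subr0 -sum0 opprD !opprB addrA.
  by rewrite [z1 + _]addrC subrK addrA addrAC.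
by rewrite {1}z1E (ipDl _ Hip) (ipBl _ Hip) !adjM.
Qed.

(* The l^1 norm of the analysis coefficients of z1 on a cluster L, when z1 is
   tied to z2 as in [missing_part_identity]: each of the three resulting sums
   is bounded by [cluster_sum_le] in the appropriate frame. *)
Lemma cluster_error_bound {R : realType} {V : lmodType R[i]}
  {ip : V -> V -> R[i]} {I1 I2 : choiceType} {psi1 : I1 -> V} {psi2 : I2 -> V}
  {PM : V -> V} (L : set I1) {z1 z2 : V} :
  is_inner_product ip -> parseval_frame ip psi1 -> parseval_frame ip psi2 ->
  (forall g, ip z1 g = ip z1 (PM g) - ip z2 g + ip z2 (PM g)) ->
  (0 <= cluster_coherence ip L (PM \o psi1) psi1)%E ->
  (0 <= cluster_coherence ip L psi1 psi2)%E ->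
  (0 <= cluster_coherence ip L (PM \o psi1) psi2)%E ->
  (l1_on L (analysis ip psi1 z1) <=
     l1 (analysis ip psi1 z1) * cluster_coherence ip L (PM \o psi1) psi1
   + l1 (analysis ip psi2 z2) * cluster_coherence ip L psi1 psi2
   + l1 (analysis ip psi2 z2) * cluster_coherence ip L (PM \o psi1) psi2)%E.
Proof.
move=> Hip F1 F2 z1E c1 c2 c3.
apply: le_trans (_ : \esum_(i in L) ((absc (ip z1 (PM (psi1 i))))%:E
   + (absc (ip z2 (psi1 i)))%:E + (absc (ip z2 (PM (psi1 i))))%:E) <= _)%E.
  by apply: le_esum => i _; rewrite /analysis z1E -!EFinD lee_fin absc_sub_add.
rewrite !esumD => [|*|*|*|*]; rewrite ?adde_ge0 ?lee_fin ?absc_ge0 //.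
by rewrite !leeD // cluster_sum_le.
Qed.

Lemma coherence_mix {R : realType} (s1 s2 u v a b c d e f : \bar R) :
  (0 <= s1)%E -> (0 <= s2)%E -> (0 <= a)%E -> (0 <= b)%E -> (0 <= c)%E ->
  (0 <= d)%E -> (0 <= e)%E -> (0 <= f)%E ->
  (u <= s1 * a + s2 * e + s2 * d)%E -> (v <= s2 * c + s1 * f + s1 * b)%E ->
  (u + v <= (s1 + s2) * (maxe (a + b) (c + d) + maxe e f))%E.
Proof.
move=> s10 s20 a0 b0 c0 d0 e0 f0 hu hv.
have mu1 : (a + b + f <= maxe (a + b) (c + d) + maxe e f)%E.
  by rewrite leeD // le_max lexx ?orbT.
have mu2 : (c + d + e <= maxe (a + b) (c + d) + maxe e f)%E.
  by rewrite leeD // le_max lexx ?orbT.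
apply: le_trans (leeD hu hv) _; rewrite ge0_muleDl //.
rewrite (AC (3*3)%AC ((1*6*5)*(4*3*2))) /= -!ge0_muleDr ?adde_ge0 //.
by rewrite leeD // lee_wpmul2l.
Qed.

Lemma error_ratio_bound {R : realType} (h : R) (S X mu : \bar R) (delta : R) :
  (h%:E <= S)%E -> (S < +oo)%E -> (0 <= mu)%E -> (mu < (1 / 2 : R)%:E)%E ->
  (S <= X + X + (delta + delta)%:E)%E -> (X <= S * mu)%E ->
  h <= 2 * delta / (1 - 2 * fine mu).
Proof.
case: S => [s| |] //; case: mu => [m| |] //; rewrite ?lte_fin ?lee_fin //= => hs _ m0 m1.
case: X => [x| |] //=; rewrite -?EFinM -?EFinD ?lee_fin //.
move=> sx xs; rewrite ler_pdivlMr; last by lra.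
by nra.
Qed.

Lemma ratio_bound_ge0 {R : realType} (delta : R) (mu : \bar R) :
  0 <= delta -> (mu < (1 / 2 : R)%:E)%E -> 0 <= 2 * delta / (1 - 2 * fine mu).
Proof.
move=> d0; case: mu => [m| |] //=; rewrite ?lte_fin => m1;
  by rewrite divr_ge0 ?mulr_ge0 //; lra.
Qed.

Theorem mainTheorem4 (R : realType) (V : lmodType R[i]) (ip : V -> V -> R[i])
  (PK PM : V -> V) (I J : choiceType) (phi1 : I -> V) (phi2 : J -> V)
  (Lambda1 : set I) (Lambda2 : set J) (delta1 delta2 : R) (f C T Cs Ts : V) :
  is_sep_hilbert ip ->
  is_orth_proj ip PK -> is_orth_proj ip PM -> (forall x, PK x + PM x = x) ->
  parseval_frame ip phi1 -> parseval_frame ip phi2 ->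
  0 < delta1 -> 0 < delta2 ->
  f = C + T ->
  (l1 (analysis ip phi1 C) + l1 (analysis ip phi2 T) < +oo)%E ->
  rel_sparse ip phi1 Lambda1 delta1 C ->
  rel_sparse ip phi2 Lambda2 delta2 T ->
  inp_sep_solution ip phi1 phi2 PK f Cs Ts ->
  let mu_c : \bar R :=
    (maxe (cluster_coherence ip Lambda1 (PM \o phi1) phi1
             + cluster_coherence ip Lambda2 (PM \o phi2) phi1)
          (cluster_coherence ip Lambda2 (PM \o phi2) phi2
             + cluster_coherence ip Lambda1 (PM \o phi1) phi2)
     + maxe (cluster_coherence ip Lambda1 phi1 phi2)
            (cluster_coherence ip Lambda2 phi2 phi1))%E in
  (mu_c < (1 / 2 : R)%:E)%E ->
  hnorm ip (Cs - C) + hnorm ip (Ts - T)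
    <= 2 * (delta1 + delta2) / (1 - 2 * fine mu_c).
Proof.
move=> [Hip _ _] HPK HPM KM F1 F2 d1 d2 fCT fin sp1 sp2 [PKsol opt] mu_c mu_half.
have ratio0 : 0 <= 2 * (delta1 + delta2) / (1 - 2 * fine mu_c).
  by apply: ratio_bound_ge0 mu_half; lra.
have [[i0]|noI] := pselect (inhabited I); last first.
  by rewrite !(parseval_frame_empty _ _ F1 (fun i => noI (inhabits i))) addr0.
have [[j0]|noJ] := pselect (inhabited J); last first.
  by rewrite !(parseval_frame_empty _ _ F2 (fun j => noJ (inhabits j))) addr0.
have PKz : PK ((Cs - C) + (Ts - T)) = 0.
  by rewrite addrACA -opprD (orth_projB HPK) PKsol fCT subrr.
have id1 := missing_part_identity Hip HPK HPM KM PKz.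
have id2 := missing_part_identity Hip HPK HPM KM (etrans (congr1 PK (addrC _ _)) PKz).
have side1 := cluster_error_bound Lambda1 Hip F1 F2 id1
  (cluster_coherence_ge0 i0) (cluster_coherence_ge0 j0) (cluster_coherence_ge0 j0).
have side2 := cluster_error_bound Lambda2 Hip F2 F1 id2
  (cluster_coherence_ge0 j0) (cluster_coherence_ge0 i0) (cluster_coherence_ge0 i0).
have opt_CT := opt C T (congr1 PK (esym fCT)).
have := l1_pair_cone fin opt_CT sp1 sp2; rewrite -!(analysisB _ Hip) => cone.
have finS : (l1 (analysis ip phi1 (Cs - C)) + l1 (analysis ip phi2 (Ts - T)) < +oo)%E.
  rewrite !(analysisB _ Hip); apply: le_lt_trans (leeD (l1_on_sub _ _ _) (l1_on_sub _ _ _)) _.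
  by rewrite addeACA lte_add_pinfty // (le_lt_trans opt_CT fin).
apply: error_ratio_bound (leeD (hnorm_le_l1 _ _ F1 _) (hnorm_le_l1 _ _ F2 _)) finS _ mu_half cone _.
  by rewrite adde_ge0 // le_max ?adde_ge0 // ?cluster_coherence_ge0.
by apply: coherence_mix side1 side2;
  first [exact: l1_ge0 | exact: cluster_coherence_ge0 i0 | exact: cluster_coherence_ge0 j0].
Qed.
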